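(* Let $N$ be a fuzzy negation and let $D_\bot$ be the smallest disjunctor, $D_\bot(x,y)=1$ if $x=1$ or $y=1$ and $D_\bot(x,y)=0$ otherwise. Then the $(A,N)$-implication $I_{D_\bot,N}(x,y)=D_\bot(N(x),y)$ does not satisfy (A5) with any conjunctor.
   Context: Aggregation function: $A:[0,1]^2\to[0,1]$ non-decreasing in each variable with $A(0,0)=0$, $A(1,1)=1$; conjunctor: additionally $A(1,0)=A(0,1)=0$. Fuzzy negation: non-increasing $N:[0,1]\to[0,1]$ with $N(0)=1$, $N(1)=0$. A fuzzy set on a nonempty set $U$ is a map $U\to[0,1]$, normal if it attains $1$. ''$I$ satisfies (A5) with $A$'': for all nonempty sets $U,V$, all normal fuzzy sets $D$ on $U$, $B$ on $V$ and every $y\in V$, $\sup_{x\in U}A(D(x),I(D(x),B(y)))=B(y)$. *)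

From Stdlib Require Import Reals.
Open Scope R_scope.

Definition in01 (x : R) : Prop := 0 <= x <= 1.

Definition aggregation (A : R -> R -> R) : Prop :=
  (forall x y, in01 x -> in01 y -> in01 (A x y)) /\
  (forall x1 x2 y, in01 x1 -> in01 x2 -> in01 y -> x1 <= x2 -> A x1 y <= A x2 y) /\
  (forall x y1 y2, in01 x -> in01 y1 -> in01 y2 -> y1 <= y2 -> A x y1 <= A x y2) /\
  A 0 0 = 0 /\ A 1 1 = 1.

Definition conjunctor (A : R -> R -> R) : Prop :=
  aggregation A /\ A 1 0 = 0 /\ A 0 1 = 0.

Definition fuzzy_negation (N : R -> R) : Prop :=
  (forall x, in01 x -> in01 (N x)) /\
  (forall x y, in01 x -> in01 y -> x <= y -> N y <= N x) /\
  N 0 = 1 /\ N 1 = 0.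

Definition D_bot (x y : R) : R :=
  if Req_EM_T x 1 then 1 else if Req_EM_T y 1 then 1 else 0.

Definition AN_impl (D : R -> R -> R) (N : R -> R) (x y : R) : R := D (N x) y.

Definition fuzzy_set {U : Type} (D : U -> R) : Prop := forall u, in01 (D u).
Definition normal {U : Type} (D : U -> R) : Prop := exists u, D u = 1.

Definition satisfies_A5 (I A : R -> R -> R) : Prop :=
  forall (U V : Type) (D : U -> R) (B : V -> R),
    inhabited U -> inhabited V ->
    fuzzy_set D -> normal D -> fuzzy_set B -> normal B ->
    forall y : V,
      is_lub (fun r => exists x : U, r = A (D x) (I (D x) (B y))) (B y).

(* Testing (A5) on the constant fuzzy set 1 over a singleton universe forces
   A(1, I(1, y)) = y for every y in [0,1].  For I = I_{D_bot,N} we have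
   I(1, y) = D_bot(N 1, y) = D_bot(0, y) = 0 whenever y <> 1, so this would
   give y = A(1, 0) = 0 for every y < 1, which fails at y = 1/2. *)
From Stdlib Require Import Reals Lra.
Open Scope R_scope.

Lemma is_lub_const_family (U : Type) (c l : R) :
  inhabited U -> is_lub (fun r => exists _ : U, r = c) l -> l = c.
Proof.
  intros [u] [Hub Hleast].
  assert (c <= l) by (apply Hub; now exists u).
  assert (l <= c) by (apply Hleast; intros r [_ ->]; apply Rle_refl).
  lra.
Qed.

Lemma satisfies_A5_top (I A : R -> R -> R) :
  satisfies_A5 I A -> forall y, in01 y -> A 1 (I 1 y) = y.
Proof.
  intros HA5 y Hy.
  pose (D := fun _ : unit => 1).
  pose (B := fun b : bool => if b then 1 else y).
  assert (HD : fuzzy_set D) by (intro; unfold D, in01; lra).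
  assert (HB : fuzzy_set B) by (intros [|]; [unfold B, in01; lra | exact Hy]).
  symmetry.
  apply (is_lub_const_family unit _ _ (inhabits tt)).
  exact (HA5 unit bool D B (inhabits tt) (inhabits true) HD
           (ex_intro _ tt eq_refl) HB (ex_intro _ true eq_refl) false).
Qed.

Lemma D_bot_0_l (y : R) : y <> 1 -> D_bot 0 y = 0.
Proof.
  intros Hy; unfold D_bot.
  destruct (Req_EM_T 0 1); [lra|].
  destruct (Req_EM_T y 1); [contradiction | reflexivity].
Qed.

Lemma AN_impl_D_bot_1_l (N : R -> R) (y : R) :
  N 1 = 0 -> y <> 1 -> AN_impl D_bot N 1 y = 0.
Proof.
  intros HN1 Hy; unfold AN_impl; rewrite HN1; exact (D_bot_0_l y Hy).
Qed.

Theorem proposition4p10 :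
  forall (N : R -> R), fuzzy_negation N ->
  forall (A : R -> R -> R), conjunctor A ->
  ~ satisfies_A5 (AN_impl D_bot N) A.
Proof.
  intros N [_ [_ [_ HN1]]] A [_ [HA10 _]] HA5.
  assert (Hhalf : in01 (/2)) by (unfold in01; lra).
  pose proof (satisfies_A5_top _ _ HA5 (/2) Hhalf) as Htop.
  rewrite AN_impl_D_bot_1_l, HA10 in Htop by (exact HN1 || lra).
  lra.
Qed.
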